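(* Let $(R,\mathfrak m)$ be a one-dimensional Cohen–Macaulay local ring. Let $I,J$ be regular trace ideals of $R$ with $J\subseteq I$ and $\ell_R(I/J)=2$. Assume that $I:I$ is a local ring and that there exists $q\in I\setminus J$ with $IJ=qJ$ and $I^2\ne qI$. Then the maximal ideal of $I:I$ is $q^{-1}J$.
   Context: $Q(R)$ is the total ring of fractions, $I:I=\{x\in Q(R)\mid xI\subseteq I\}$, and $\ell_R$ denotes length. An ideal is regular if it contains a non-zerodivisor; a trace ideal is an ideal of the form $\sum_{f\in\mathrm{Hom}_R(M,R)}\mathrm{Im}f$ for some $R$-module $M$. *)

From HB Require Import structures.
From mathcomp Require Import all_boot all_order all_algebra.
Set Implicit Arguments. Unset Strict Implicit. Unset Printing Implicit Defensive.
Import Order.TTheory GRing.Theory Num.Theory.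
Local Open Scope ring_scope.

Section CommAlg.
Variable R : comNzRingType.

Definition same_set (P Q : R -> Prop) := forall x, P x <-> Q x.
Definition incl (P Q : R -> Prop) := forall x, P x -> Q x.

Definition is_ideal (I : R -> Prop) :=
  [/\ I 0, (forall x y, I x -> I y -> I (x + y)) & (forall r x, I x -> I (r * x))].

Definition proper_ideal (I : R -> Prop) := is_ideal I /\ ~ I 1.

Definition prime_ideal (P : R -> Prop) :=
  proper_ideal P /\ (forall x y, P (x * y) -> P x \/ P y).

Definition maximal_ideal (M : R -> Prop) :=
  proper_ideal M /\
  (forall N, is_ideal N -> incl M N -> same_set N M \/ N 1).

Definition local_ring (m : R -> Prop) :=
  maximal_ideal m /\ (forall N, maximal_ideal N -> same_set N m).

Definition noetherian :=
  forall I : nat -> R -> Prop, (forall n, is_ideal (I n)) ->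
    (forall n, incl (I n) (I n.+1)) ->
    exists N, forall n, (N <= n)%N -> incl (I n) (I N).

Definition strict_subset (P Q : R -> Prop) := incl P Q /\ ~ incl Q P.

Definition prime_chain (n : nat) :=
  exists P : nat -> R -> Prop, (forall i, prime_ideal (P i)) /\
    (forall i, (i < n)%N -> strict_subset (P i) (P i.+1)).

Definition krull_dim_eq (n : nat) := prime_chain n /\ ~ prime_chain n.+1.

Definition nzd (s : R) := forall x, s * x = 0 -> x = 0.

Definition gen_by (xs : seq R) (i : nat) (y : R) :=
  exists c : nat -> R, y = \sum_(k < i) c k * xs`_k.

Definition regular_seq (m : R -> Prop) (xs : seq R) :=
  (forall x, x \in xs -> m x) /\
  ~ gen_by xs (size xs) 1 /\
  (forall i, (i < size xs)%N ->
     forall y, gen_by xs i (xs`_i * y) -> gen_by xs i y).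

(* Cohen-Macaulay local ring: depth (length of a maximal regular sequence
   in m) equals the Krull dimension; since depth <= dim always, this is
   the existence of a regular sequence of length dim R in m. *)
Definition cohen_macaulay_local (m : R -> Prop) (d : nat) :=
  [/\ noetherian, local_ring m, krull_dim_eq d &
      exists xs, size xs = d /\ regular_seq m xs].

Definition regular_ideal (I : R -> Prop) := exists s, I s /\ nzd s.

(* trace ideal: I = sum_{f in Hom_R(M,R)} Im f for some R-module M *)
Definition trace_ideal (I : R -> Prop) :=
  exists M : lmodType R, forall x, I x <->
    exists n (f : 'I_n -> {linear M -> R^o}) (v : 'I_n -> M),
      x = \sum_(k < n) (f k (v k) : R).

(* length of the R-module I/J equals n: a composition series
   J = K_0 < K_1 < ... < K_n = I of ideals with simple factors *)
Definition length_quot_eq (I J : R -> Prop) (n : nat) :=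
  exists K : nat -> R -> Prop,
    [/\ same_set (K 0%N) J, same_set (K n) I,
        forall i, is_ideal (K i) &
        forall i, (i < n)%N -> strict_subset (K i) (K i.+1) /\
          forall L, is_ideal L -> incl (K i) L -> incl L (K i.+1) ->
            same_set L (K i) \/ same_set L (K i.+1)].

Definition ideal_mul (I J : R -> Prop) (x : R) :=
  exists n (a b : 'I_n -> R), (forall k, I (a k)) /\ (forall k, J (b k)) /\
    x = \sum_(k < n) a k * b k.
Definition scale_set (q : R) (I : R -> Prop) (x : R) := exists i, I i /\ x = q * i.

(* ---- Total ring of fractions Q(R) ----
   An element of Q(R) is a fraction a/s with s a non-zerodivisor;
   a/s = b/t iff a*t = b*s.  Subsets of Q(R) are predicates
   F : R -> R -> Prop on pairs (numerator, denominator), required to be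
   invariant under this equality. *)
Definition frac_eq (a s b t : R) := a * t = b * s.

Definition frac_set (F : R -> R -> Prop) :=
  forall a s b t, nzd s -> nzd t -> frac_eq a s b t -> F a s -> F b t.

(* I:I = { x in Q(R) | x I ⊆ I } *)
Definition colon_self (I : R -> Prop) (a s : R) :=
  nzd s /\ forall i, I i -> exists i', I i' /\ a * i = s * i'.

Definition colon_ideal (I : R -> Prop) (F : R -> R -> Prop) :=
  [/\ frac_set F,
      (forall a s, F a s -> colon_self I a s),
      F 0 1,
      (forall a s b t, F a s -> F b t -> F (a * t + b * s) (s * t)) &
      (forall a s b t, colon_self I a s -> F b t -> F (a * b) (s * t))].

Definition colon_proper_ideal (I : R -> Prop) (F : R -> R -> Prop) :=
  colon_ideal I F /\ ~ F 1 1.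

Definition colon_same (F G : R -> R -> Prop) :=
  forall a s, nzd s -> (F a s <-> G a s).
Definition colon_sub (F G : R -> R -> Prop) :=
  forall a s, F a s -> G a s.

Definition colon_maximal_ideal (I : R -> Prop) (F : R -> R -> Prop) :=
  colon_proper_ideal I F /\
  (forall G, colon_ideal I G -> colon_sub F G -> colon_same G F \/ G 1 1).

Definition colon_local (I : R -> Prop) :=
  exists F, colon_maximal_ideal I F /\
    forall G, colon_maximal_ideal I G -> colon_same G F.

Definition inv_scale (q : R) (J : R -> Prop) (a s : R) :=
  exists j, J j /\ frac_eq a s j q.

End CommAlg.

(* The fractions j/q with j in J form a proper ideal of I:I: since IJ = qJ, they
   send I into J, multiplication by I:I preserves the trace ideal J, and 1 is
   missed because q is not in J.  If G is a proper ideal of I:I containing it,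
   the numerator ideals L = {x | x/q in G} and B = {x | x/q in I:I} form a chain
   J <= L < B < I: q lies in B but not in L, and B = I would give I^2 = qI.
   Since I/J has length 2 this forces L = J, i.e. G = q^-1 J.  So q^-1 J is a
   maximal ideal, hence the maximal ideal of the local ring I:I. *)

From HB Require Import structures.
From mathcomp Require Import all_boot all_order all_algebra.
From mathcomp Require Import ring.
From Stdlib Require Import Classical.
Import GRing.Theory.
Set Implicit Arguments. Unset Strict Implicit.
Local Open Scope ring_scope.

Section Ideals.
Variable R : comNzRingType.
Implicit Types (A B I J K L : R -> Prop) (x y : R).

Lemma ideal0 I : is_ideal I -> I 0. Proof. by case. Qed.

Lemma idealD I x y : is_ideal I -> I x -> I y -> I (x + y).
Proof. by case=> _ + _; apply. Qed.

Lemma idealM I r x : is_ideal I -> I x -> I (r * x).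
Proof. by case=> _ _; apply. Qed.

Lemma idealB I x y : is_ideal I -> I x -> I y -> I (x - y).
Proof. by move=> iI Ix Iy; rewrite -mulN1r; apply: idealD => //; apply: idealM. Qed.

Definition ideal_add A B x := exists y z, [/\ A y, B z & x = y + z].
Definition ideal_cap A B x := A x /\ B x.

Lemma is_ideal_add A B : is_ideal A -> is_ideal B -> is_ideal (ideal_add A B).
Proof.
move=> iA iB; split.
- by exists 0, 0; rewrite addr0; split=> //; apply: ideal0.
- move=> _ _ [y1 [z1 [A1 B1 ->]]] [y2 [z2 [A2 B2 ->]]].
  by exists (y1 + y2), (z1 + z2); rewrite addrACA; split=> //; apply: idealD.
- move=> r _ [y [z [Ay Bz ->]]].
  by exists (r * y), (r * z); rewrite mulrDr; split=> //; apply: idealM.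
Qed.

Lemma is_ideal_cap A B : is_ideal A -> is_ideal B -> is_ideal (ideal_cap A B).
Proof.
move=> iA iB; split.
- by split; apply: ideal0.
- by move=> x y [? ?] [? ?]; split; apply: idealD.
- by move=> r x [? ?]; split; apply: idealM.
Qed.

Lemma incl_addl A B : is_ideal B -> incl A (ideal_add A B).
Proof. by move=> iB x Ax; exists x, 0; rewrite addr0; split=> //; apply: ideal0. Qed.

Lemma incl_addr A B : is_ideal A -> incl B (ideal_add A B).
Proof. by move=> iA x Bx; exists 0, x; rewrite add0r; split=> //; apply: ideal0. Qed.

Lemma ideal_add_incl A B C : is_ideal C -> incl A C -> incl B C ->
  incl (ideal_add A B) C.
Proof. by move=> iC AC BC _ [y [z [Ay Bz ->]]]; apply: idealD; auto. Qed.

Lemma length_quot_eq2_mid I J : length_quot_eq I J 2 ->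
  exists K, [/\ is_ideal K, incl J K, incl K I,
    (forall L, is_ideal L -> incl J L -> incl L K -> incl L J \/ incl K L) &
    (forall L, is_ideal L -> incl K L -> incl L I -> incl L K \/ incl I L)].
Proof.
move=> [K [K0 K2 iK steps]].
have [[K01 _] simple0] := steps 0%N isT.
have [[K12 _] simple1] := steps 1%N isT.
exists (K 1%N); split=> //.
- by move=> x /K0 /K01.
- by move=> x /K12 /K2.
- move=> L iL JL LK; have K0L : incl (K 0%N) L by move=> x /K0 /JL.
  case: (simple0 L iL K0L LK) => EL; [left|right] => x.
  + by move=> /EL /K0.
  + by move=> /EL.
- move=> L iL KL LI; have LK2 : incl L (K 2%N) by move=> x /LI /K2.
  case: (simple1 L iL KL LK2) => EL; [left|right] => x.
  + by move=> /EL.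
  + by move=> /K2 /EL.
Qed.

Lemma length_quot_eq2_chain I J L B : length_quot_eq I J 2 ->
  is_ideal I -> is_ideal L -> is_ideal B -> incl J L -> incl L B -> incl B I ->
  ~ incl B L -> ~ incl I B -> incl L J.
Proof.
move=> len iI iL iB JL LB BI nBL nIB.
have [K [iK JK KI lowK upK]] := length_quot_eq2_mid len.
(* Compare B with the middle term K through B + K in [K, I] and B /\ K in
   [J, K]: the only consistent case is B /\ K = J, B + K = I, and there
   L + K = I would force B <= L, so L <= K /\ B = J. *)
have BKI : incl (ideal_add B K) I by apply: ideal_add_incl.
case: (upK _ (is_ideal_add iB iK) (incl_addr iB) BKI) => [BKK | IBK].
  have BK : incl B K by move=> x /(incl_addl iK) /BKK.
  case: (lowK B iB (fun x Jx => LB x (JL x Jx)) BK) => [BJ | KB].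
    by case: nBL => x /BJ /JL.
  case: (lowK L iL JL (fun x Lx => BK x (LB x Lx))) => // KL.
  by case: nBL => x /BK /KL.
have [capJ | Kcap] := lowK _ (is_ideal_cap iB iK)
  (fun x Jx => conj (LB x (JL x Jx)) (JK x Jx)) (fun x => @proj2 _ _).
  have LKI : incl (ideal_add L K) I by apply: ideal_add_incl => // x /LB /BI.
  case: (upK _ (is_ideal_add iL iK) (incl_addr iL) LKI) => [LKK | ILK].
    by move=> x Lx; apply/capJ; split; [exact: LB | exact/LKK/incl_addl].
  case: nBL => x Bx; have [l [k [Ll Kk Ex]]] := ILK x (BI x Bx).
  have Bk : B k.
    have -> : k = x - l by rewrite Ex addrAC subrr add0r.
    by apply: idealB => //; exact: LB.
  by rewrite Ex; apply: idealD => //; apply/JL/capJ.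
case: nIB => x /IBK [y [k [By Kk ->]]].
by apply: idealD => //; case: (Kcap k Kk).
Qed.

End Ideals.

Section Colon.
Variable R : comNzRingType.
Implicit Types (I J : R -> Prop) (G : R -> R -> Prop) (a s q x y : R).

Lemma nzd_mulI s x y : nzd s -> s * x = s * y -> x = y.
Proof.
by move=> ns E; apply/eqP; rewrite -subr_eq0; apply/eqP/ns; rewrite mulrBr E subrr.
Qed.

Lemma nzd1 : nzd (1 : R). Proof. by move=> x; rewrite mul1r. Qed.

Lemma nzdM s t : nzd s -> nzd t -> nzd (s * t).
Proof. by move=> ns nt x; rewrite -mulrA => /ns /nt. Qed.

Lemma nzdMl s t : nzd (s * t) -> nzd s.
Proof. by move=> nst x sx; apply: nst; rewrite mulrAC sx mul0r. Qed.

Lemma mem_ideal_mul I J x y : I x -> J y -> ideal_mul I J (x * y).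
Proof. by move=> Ix Jy; exists 1%N, (fun=> x), (fun=> y); rewrite big_ord1. Qed.

Lemma colon_self_scalar I r : is_ideal I -> colon_self I r 1.
Proof.
move=> iI; split=> [|i Ii]; first exact: nzd1.
by exists (r * i); rewrite mul1r; split=> //; apply: idealM.
Qed.

Lemma colon_ideal_colon_self I : is_ideal I -> colon_ideal I (colon_self I).
Proof.
move=> iI; split=> //.
- move=> a s b t ns nt E [_ Ha]; split=> // i /Ha [i' [Ii' Ei]]; exists i'; split=> //.
  apply: (nzd_mulI ns); transitivity (t * (a * i)); last by rewrite Ei; ring.
  by rewrite mulrA [s * b]mulrC -E; ring.
- exact: colon_self_scalar.
- move=> a s b t [ns Ha] [nt Hb]; split=> [|i Ii]; first exact: nzdM.
  have [[i1 [Ii1 E1]] [i2 [Ii2 E2]]] := (Ha i Ii, Hb i Ii).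
  exists (i1 + i2); split; first exact: idealD.
  transitivity (t * (a * i) + s * (b * i)); first by ring.
  by rewrite E1 E2; ring.
- move=> a s b t [ns Ha] [nt Hb]; split=> [|i Ii]; first exact: nzdM.
  have [i2 [Ii2 E2]] := Hb i Ii; have [i1 [Ii1 E1]] := Ha i2 Ii2.
  by exists i1; split=> //; rewrite -mulrA E2 mulrCA E1; ring.
Qed.

Definition numer_ideal G q x := G x q.

Lemma is_ideal_numer I G q : is_ideal I -> nzd q -> colon_ideal I G ->
  is_ideal (numer_ideal G q).
Proof.
move=> iI nq [Gf _ G01 GD GM]; split.
- by apply: (Gf 0 1) => //; [exact: nzd1 | rewrite /frac_eq !mul0r].
- move=> x y Gx Gy; apply: (Gf _ _ _ _ (nzdM nq nq) nq _ (GD _ _ _ _ Gx Gy)).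
  by rewrite /frac_eq; ring.
- move=> r x Gx; apply: (Gf _ _ _ _ _ nq _ (GM _ _ _ _ (colon_self_scalar r iI) Gx)).
  + by rewrite mul1r.
  + by rewrite /frac_eq mul1r.
Qed.

Lemma numer_colon_self_incl I q : nzd q -> I q ->
  incl (numer_ideal (colon_self I) q) I.
Proof.
by move=> nq Iq x [_ /(_ q Iq) [i [Ii E]]]; rewrite (nzd_mulI nq (etrans (mulrC _ _) E)).
Qed.

Lemma ideal_mul_sq_scale I q : is_ideal I -> I q ->
  incl I (numer_ideal (colon_self I) q) -> same_set (ideal_mul I I) (scale_set q I).
Proof.
move=> iI Iq Icol x; split=> [[n [a [b [Ia [Ib ->]]]]] | [i [Ii ->]]]; last first.
  exact: mem_ideal_mul.
elim/big_ind: _ => [|_ _ [i1 [Ii1 ->]] [i2 [Ii2 ->]] | k _].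
- by exists 0; rewrite mulr0; split=> //; apply: ideal0.
- by exists (i1 + i2); rewrite mulrDr; split=> //; apply: idealD.
- by have [_ /(_ _ (Ib k)) [i [Ii E]]] := Icol _ (Ia k); exists i.
Qed.

Definition linear_of (M : lmodType R) (g : M -> R^o) (lg : linear g) :
  {linear M -> R^o} := HB.pack g (GRing.isLinear.Build R M R^o *:%R g lg).

(* Multiplication by [a/s] in [I:I] sends each [f : Hom(M, R)] with image in [J]
   to another element [a/s * f] of [Hom(M, R)], so it preserves the trace [J]. *)
Lemma trace_ideal_colon_stable I J a s j : trace_ideal J -> incl J I ->
  colon_self I a s -> J j -> exists j', J j' /\ a * j = s * j'.
Proof.
move=> [M HM] JI [ns Has] /HM [n [f [v ->]]].
have fJ k u : J (f k u) by apply/HM; exists 1%N, (fun=> f k), (fun=> u); rewrite big_ord1.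
have divf k u : exists r, a * f k u == s * r.
  by have [r [_ E]] := Has _ (JI _ (fJ k u)); exists r; apply/eqP.
pose g k u := xchoose (divf k u).
have gE k u : a * f k u = s * g k u by apply/eqP/(xchooseP (divf k u)).
have lin_g k : linear (g k : M -> R^o).
  move=> c u w; apply: (nzd_mulI ns); rewrite -gE linearP.
  change (a * (c * f k u + f k w) = s * (c * g k u + g k w)).
  by rewrite !mulrDr mulrCA !gE mulrCA.
exists (\sum_(k < n) linear_of (lin_g k) (v k)); split.
  by apply/HM; exists n, (fun k => linear_of (lin_g k)), v.
by rewrite !mulr_sumr; apply: eq_bigr => k _; exact: gE.
Qed.

End Colon.

Definition inv_scale_nzd (R : comNzRingType) (q : R) (J : R -> Prop) (a s : R) :=
  nzd s /\ inv_scale q J a s.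

Section InvScale.
Variable R : comNzRingType.
Variables (I J : R -> Prop) (q : R).
Hypotheses (iI : is_ideal I) (iJ : is_ideal J) (JI : incl J I) (trJ : trace_ideal J).
Hypotheses (nq : nzd q) (IJ_qJ : incl (ideal_mul I J) (scale_set q J)).

Lemma colon_ideal_inv_scale : colon_ideal I (inv_scale_nzd q J).
Proof.
split.
- move=> a s b t ns nt E [_ [j [Jj Ej]]]; split=> //; exists j; split=> //.
  apply: (nzd_mulI ns); rewrite /frac_eq in E Ej *.
  by rewrite mulrA [s * b]mulrC -E mulrAC Ej; ring.
- move=> a s [ns [j [Jj Ej]]]; split=> // i Ii.
  have [j' [Jj' E']] := IJ_qJ (mem_ideal_mul Ii Jj).
  exists j'; split; first exact: JI.
  apply: (nzd_mulI nq); rewrite /frac_eq in Ej.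
  transitivity (s * (i * j)); last by rewrite E'; ring.
  by rewrite mulrA [q * a]mulrC Ej; ring.
- by split; [exact: nzd1 | exists 0; rewrite /frac_eq !mul0r; split=> //; apply: ideal0].
- move=> a s b t [ns [j1 [J1 E1]]] [nt [j2 [J2 E2]]]; split; first exact: nzdM.
  exists (j1 + j2); split; first exact: idealD.
  by rewrite /frac_eq in E1 E2 *; rewrite mulrDl mulrAC E1 [b * s * q]mulrAC E2; ring.
- move=> a s b t Has [nt [j [Jj Ej]]].
  have [j' [Jj' E']] := trace_ideal_colon_stable trJ JI Has Jj.
  split; first exact: (nzdM Has.1 nt).
  exists j'; split=> //; rewrite /frac_eq in Ej *.
  by rewrite -mulrA Ej mulrA E'; ring.
Qed.

Lemma colon_sub_inv_scale G : I q -> colon_ideal I G ->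
  incl (numer_ideal G q) J -> colon_sub G (inv_scale_nzd q J).
Proof.
move=> Iq [Gf Gc _ _ _] GJ a s Gas; have [ns /(_ q Iq) [i [Ii E]]] := Gc _ _ Gas.
have Ei : frac_eq a s i q by rewrite /frac_eq E mulrC.
by split=> //; exists i; split=> //; apply/GJ/(Gf a s i q ns nq Ei).
Qed.

Lemma colon_maximal_inv_scale : I q -> ~ J q -> length_quot_eq I J 2 ->
  ~ same_set (ideal_mul I I) (scale_set q I) ->
  colon_maximal_ideal I (inv_scale_nzd q J).
Proof.
move=> Iq nJq len nII; split; first split; first exact: colon_ideal_inv_scale.
  by move=> [_ [j [Jj E]]]; apply: nJq; rewrite /frac_eq mul1r mulr1 in E; rewrite E.
move=> G cG NG; have [Gf Gc _ _ _] := cG.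
case: (classic (G 1 1)) => [|nG]; [by right | left].
pose B := numer_ideal (colon_self I) q.
have JL : incl J (numer_ideal G q).
  by move=> j Jj; apply: NG; split=> //; exists j.
have LB : incl (numer_ideal G q) B by move=> x /Gc.
have nBL : ~ incl B (numer_ideal G q).
  have Bq : B q by split=> // i Ii; exists i.
  move=> /(_ q Bq) Gq; apply: nG.
  by apply: (Gf q q) => //; [exact: nzd1 | rewrite /frac_eq mulr1 mul1r].
have nIB : ~ incl I B by move=> /(ideal_mul_sq_scale iI Iq).
have LJ := length_quot_eq2_chain len iI (is_ideal_numer iI nq cG)
  (is_ideal_numer iI nq (colon_ideal_colon_self iI)) JL LB
  (numer_colon_self_incl nq Iq) nBL nIB.
by move=> a s ns; split; [exact: (colon_sub_inv_scale Iq cG LJ) | exact: NG].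
Qed.

End InvScale.

Theorem lemma2p7 (R : comNzRingType) (m : R -> Prop) (I J : R -> Prop) (q : R) :
  cohen_macaulay_local m 1 ->
  is_ideal I -> is_ideal J ->
  regular_ideal I -> regular_ideal J ->
  trace_ideal I -> trace_ideal J ->
  incl J I ->
  length_quot_eq I J 2 ->
  colon_local I ->
  I q -> ~ J q ->
  same_set (ideal_mul I J) (scale_set q J) ->
  ~ same_set (ideal_mul I I) (scale_set q I) ->
  nzd q /\
  forall M : R -> R -> Prop, colon_maximal_ideal I M ->
    colon_same M (inv_scale q J).
Proof.
move=> _ iI iJ _ [s [Js ns]] _ trJ JI len [F [_ Funiq]] Iq nJq IJ nII.
have IJ_qJ : incl (ideal_mul I J) (scale_set q J) by move=> x /IJ.
have nq : nzd q.
  have [j [_ E]] := IJ_qJ _ (mem_ideal_mul (JI _ Js) Js).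
  by apply: (@nzdMl _ q j); rewrite -E; exact: nzdM.
split=> // M MM a t nt.
have NF := Funiq _ (colon_maximal_inv_scale iI iJ JI trJ nq IJ_qJ Iq nJq len nII) a t nt.
rewrite (Funiq M MM a t nt) -NF.
by split=> [[]|].
Qed.
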